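(* Let $D \in \mathbb{R}^{m \times n}$, let $Q \in \mathbb{Z}^{m\times n}$ be such that for each $j$ the $j$th column of $Q$ stores the sorting of the $j$th column of $D$, and let $(a_1,\ldots,a_p)$ be a sequence with $a_k \in \{0,\ldots,n-1\}$ for all $k$. Then QuickLexSort$(D,Q,(a_1,\ldots,a_p))$ returns the ranking vector of the lexicographical sorting of the sub-matrix of $D$ determined by the sequence of columns $(a_1,\ldots,a_p)$.
   Context: Rows of $D$ are indexed by $\{0,\ldots,m-1\}$, columns by $\{0,\ldots,n-1\}$. ''The $j$th column of $Q$ stores the sorting of the $j$th column of $D$'' means $(Q_{0j},\ldots,Q_{m-1,j})$ is a permutation of $\{0,\ldots,m-1\}$ with $D_{Q_{0j},j} \le \cdots \le D_{Q_{m-1,j},j}$. For a sequence of columns $(b_1,\ldots,b_q)$, the sub-matrix determined by it has row $r$ equal to $(D_{r b_1},\ldots,D_{r b_q})$; rows are compared lexicographically ($v <_{\mathrm{lex}} w$ iff $v_1<w_1$, or $v_1=w_1,\ldots,v_k=w_k$ and $v_{k+1}<w_{k+1}$ for some $k$). The ranking vector of this ordering is the unique $L \in \{0,\ldots,m-1\}^m$ such that equal rows get equal values, a lexicographically smaller row gets a strictly smaller value, and $\sum_r L_r$ is minimal (equivalently, $L_r$ is the number of distinct rows strictly lexicographically smaller than row $r$). QuickLexSortRefine$(D,Q,i,L)$: initialize integer arrays $\mathrm{IDval},\mathrm{IDvalInit},\mathrm{subID},\mathrm{newCount},\mathrm{numNewID}$ of length $m$ to zero. For $j=0,\ldots,m-1$: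 let $r := Q[j,i]$, $\ell := L[r]$; if $\mathrm{IDvalInit}[\ell]=0$, set $\mathrm{IDvalInit}[\ell]:=1$, $\mathrm{IDval}[\ell]:=D[r,i]$; otherwise if $\mathrm{IDval}[\ell]\neq D[r,i]$, set $\mathrm{IDval}[\ell]:=D[r,i]$ and increment $\mathrm{newCount}[\ell]$; then set $\mathrm{subID}[r]:=\mathrm{newCount}[\ell]$. Set $\mathrm{numNewID}[m-1]:=\sum_{j=0}^{m-2}\mathrm{newCount}[j]$ and for $j=m-2,\ldots,1$, $\mathrm{numNewID}[j]:=\mathrm{numNewID}[j+1]-\mathrm{newCount}[j]$ ($\mathrm{numNewID}[0]=0$). Return $L'$ with $L'[j]:=L[j]+\mathrm{numNewID}[L[j]]+\mathrm{subID}[j]$ for $j=0,\ldots,m-1$. QuickLexSort$(D,Q,(a_1,\ldots,a_p))$: set $L'$ to the zero vector of length $m$; for $k=1,\ldots,p$ in order, set $L' := $ QuickLexSortRefine$(D,Q,a_k,L')$; return $L'$. *)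

From HB Require Import structures.
From mathcomp Require Import all_boot all_order all_algebra.
From mathcomp Require Import reals.
Set Implicit Arguments. Unset Strict Implicit. Unset Printing Implicit Defensive.
Import Order.TTheory GRing.Theory Num.Theory.
Local Open Scope ring_scope.

Section QLS.
Variables (R : realType) (m n : nat).

(* Entry D[r,i] with a natural row index r (0 if r is out of range, never
   used under the hypotheses). *)
Definition Dat (D : 'M[R]_(m, n)) (r : nat) (i : 'I_n) : R :=
  if (insub r : option 'I_m) is Some r' then D r' i else 0.

(* Entry Q[j,i] of the integer matrix Q, with a natural row index j,
   read as a natural number (its entries are in {0..m-1} by hypothesis). *)
Definition Qat (Q : 'M[int]_(m, n)) (j : nat) (i : 'I_n) : nat :=
  if (insub j : option 'I_m) is Some j' then absz (Q j' i) else 0%N.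

(* State: (IDval, IDvalInit, subID, newCount) *)
Definition refine_step (D : 'M[R]_(m, n)) (Q : 'M[int]_(m, n)) (i : 'I_n)
    (L : seq nat) (st : seq R * seq nat * seq nat * seq nat) (j : nat)
    : seq R * seq nat * seq nat * seq nat :=
  let: (idv, init, sub, cnt) := st in
  let r := Qat Q j i in
  let l := nth 0%N L r in
  let d := Dat D r i in
  if nth 0%N init l == 0%N then
    (set_nth 0 idv l d, set_nth 0%N init l 1%N, set_nth 0%N sub r (nth 0%N cnt l), cnt)
  else if nth 0 idv l != d then
    let cnt' := set_nth 0%N cnt l (nth 0%N cnt l).+1 in
    (set_nth 0 idv l d, init, set_nth 0%N sub r (nth 0%N cnt' l), cnt')
  else (idv, init, set_nth 0%N sub r (nth 0%N cnt l), cnt).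

Definition QuickLexSortRefine (D : 'M[R]_(m, n)) (Q : 'M[int]_(m, n))
    (i : 'I_n) (L : seq nat) : seq nat :=
  let: (_, _, sub, cnt) :=
    foldl (refine_step D Q i L) (nseq m 0, nseq m 0%N, nseq m 0%N, nseq m 0%N)
          (iota 0 m) in
  let nn0 := set_nth 0%N (nseq m 0%N) (m - 1)
               (\sum_(0 <= j < m - 1) nth 0%N cnt j)%N in
  let nn := foldl (fun nn j => set_nth 0%N nn j (nth 0%N nn j.+1 - nth 0%N cnt j)%N)
                  nn0 (rev (iota 1 (m - 2))) in
  [seq (nth 0%N L j + nth 0%N nn (nth 0%N L j) + nth 0%N sub j)%N | j <- iota 0 m].

Definition QuickLexSort (D : 'M[R]_(m, n)) (Q : 'M[int]_(m, n))
    (a : seq 'I_n) : seq nat :=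
  foldl (fun L i => QuickLexSortRefine D Q i L) (nseq m 0%N) a.

Fixpoint lexlt (v w : seq R) : bool :=
  match v, w with
  | x :: v', y :: w' => (x < y) || ((x == y) && lexlt v' w')
  | _, _ => false
  end.

Definition subrow (D : 'M[R]_(m, n)) (a : seq 'I_n) (r : 'I_m) : seq R :=
  [seq D r b | b <- a].

Definition ranking_vector (D : 'M[R]_(m, n)) (a : seq 'I_n) : seq nat :=
  [seq size (undup [seq subrow D a r' | r' <- enum 'I_m &
                      lexlt (subrow D a r') (subrow D a r)])
  | r <- enum 'I_m].

Definition sorting_matrix (D : 'M[R]_(m, n)) (Q : 'M[int]_(m, n)) : Prop :=
  forall j : 'I_n,
    perm_eq [seq Q k j | k <- enum 'I_m] [seq (k%:Z)%R | k <- iota 0 m] /\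
    sorted <=%R [seq Dat D (Qat Q k j) j | k <- iota 0 m].
End QLS.

From HB Require Import structures.
From mathcomp Require Import all_boot all_order all_algebra.
From mathcomp Require Import reals.
Set Implicit Arguments. Unset Strict Implicit. Unset Printing Implicit Defensive.
Import Order.TTheory GRing.Theory Num.Theory.

(* Induct on the column sequence: appending a column i refines the ranking L
   of a.  The new rank of row r counts the distinct pairs (L r', D r' i)
   lexicographically below (L r, D r i): all distinct values of column i in
   each block {r' | L r' = j} with j < L r, plus those below D r i in the block
   of r.  Since every rank below L r is attained, each such block is nonempty,
   so this is L r + sum_{j < L r} (#values in block j - 1) + #values below D r i
   in block L r.  Scanning the rows in nondecreasing order of column i (the
   order given by Q), IDval[l] is the last value seen in block l, so newCount[l]
   ends as the number of distinct values of block l minus one, subID[r] is the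
   number of distinct values of its block below D r i, and numNewID[l] is the
   prefix sum of newCount. *)

Section SizeUndup.
Variable T : eqType.

Lemma eq_size_undup (s1 s2 : seq T) : s1 =i s2 -> size (undup s1) = size (undup s2).
Proof.
move=> E; apply: perm_size; apply: uniq_perm; rewrite ?undup_uniq // => x.
by rewrite !mem_undup E.
Qed.

Lemma size_undup_rcons (s : seq T) x :
  size (undup (rcons s x)) = if x \in s then size (undup s) else (size (undup s)).+1.
Proof.
rewrite (@eq_size_undup _ (x :: s)) /=; last by move=> y; rewrite mem_rcons.
by case: ifP.
Qed.

End SizeUndup.

Lemma size_undup_map (T1 T2 T3 : eqType) (f : T1 -> T2) (g : T1 -> T3) s :
  {in s &, forall x y, (f x == f y) = (g x == g y)} ->
  size (undup (map f s)) = size (undup (map g s)).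
Proof.
elim: s => [//|x s IH] fg /=.
have fg_s : {in s &, forall x y, (f x == f y) = (g x == g y)}.
  by move=> y z ys zs; apply: fg; rewrite inE ?ys ?zs orbT.
have -> : (f x \in map f s) = (g x \in map g s).
  apply/mapP/mapP => -[y ys e]; exists y => //; apply/eqP.
    by rewrite -fg ?inE ?ys ?eqxx ?orbT // e.
  by rewrite fg ?inE ?ys ?eqxx ?orbT // e.
by case: ifP => _ //=; rewrite IH.
Qed.

Lemma size_undup_filter_le_pred (T : eqType) (disp : Order.disp_t)
    (U : porderType disp) (f : T -> U) (P : pred T) (s : seq T) x :
  x \in s -> P x ->
  (size (undup [seq f y | y <- s & P y && (f y <= f x)%O])).-1 =
  size (undup [seq f y | y <- s & P y && (f y < f x)%O]).
Proof.
move=> xs Px.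
set below := [seq f y | y <- s & P y && (f y < f x)%O].
rewrite (@eq_size_undup _ _ (f x :: below)) /=.
  rewrite ifF //; apply/mapP => -[y]; rewrite mem_filter => /andP[/andP[_ lt] _] e.
  by move: lt; rewrite -e ltxx.
move=> z; rewrite inE; apply/mapP/idP => [[y]|].
  rewrite mem_filter => /andP[/andP[Py]]; rewrite le_eqVlt => /orP[/eqP -> _ -> //|lt ys ->].
    by rewrite eqxx.
  by apply/orP; right; apply/mapP; exists y; rewrite // mem_filter Py lt.
case/orP => [/eqP ->|/mapP[y]]; first by exists x; rewrite // mem_filter Px lexx.
by rewrite mem_filter => /andP[/andP[Py lt] ys] ->; exists y; rewrite // mem_filter Py ltW.
Qed.

Section Lexicographic.
Variable R : realType.
Implicit Types u v w : seq R.

Lemma lexlt_irr v : lexlt v v = false.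
Proof. by elim: v => //= x v ->; rewrite ltxx andbF. Qed.

Lemma lexlt_trans u v w : lexlt u v -> lexlt v w -> lexlt u w.
Proof.
elim: u v w => [|x u IH] [|y v] [|z w] //=.
case/orP=> [xy|/andP[/eqP <- uv]]; case/orP=> [yz|/andP[/eqP <- vw]].
- by rewrite (lt_trans xy yz).
- by rewrite xy.
- by rewrite yz.
- by rewrite eqxx (IH _ _ uv vw) orbT.
Qed.

Lemma lexlt_total u v : size u = size v -> u != v -> lexlt u v || lexlt v u.
Proof.
elim: u v => [|x u IH] [|y v] //= [] /IH {}IH.
by rewrite eqseq_cons negb_and; case: (ltgtP x y) => //= _; rewrite eqxx.
Qed.

Lemma lexlt_rcons u v x y : size u = size v ->
  lexlt (rcons u x) (rcons v y) = lexlt u v || (u == v) && (x < y)%R.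
Proof.
elim: u v => [|a u IH] [|b v] //=; first by rewrite andbF orbF.
case=> /IH ->; rewrite eqseq_cons; case: (ltgtP a b) => //=.
Qed.

End Lexicographic.

Lemma count_fst_lt (T : Type) (s : seq (nat * T)) l :
  count (fun p => p.1 < l) s = \sum_(0 <= j < l) count (fun p => p.1 == j) s.
Proof.
elim: l => [|l IH]; first by rewrite big_geq // (eq_count (a2 := pred0)) ?count_pred0.
rewrite big_nat_recr //= -IH.
have := count_predUI (fun p : nat * T => p.1 < l) (fun p => p.1 == l) s.
rewrite (eq_count (a1 := predI _ _) (a2 := pred0)); last by move=> p /=; case: ltngtP.
rewrite count_pred0 addn0 => <-; apply: eq_count => p /=.
by rewrite ltnS leq_eqVlt orbC.
Qed.

Section PairCounting.
Variables (T : eqType) (s : seq (nat * T)).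

Lemma size_undup_snd_fst_eq (C : pred (nat * T)) j :
  (forall p, C p -> p.1 = j) ->
  size (undup [seq p.2 | p <- s & C p]) = count C (undup s).
Proof.
move=> Cj; rewrite -size_filter filter_undup -[in RHS](map_id [seq p <- s | C p]).
apply: size_undup_map => p q; rewrite !mem_filter => /andP[Cp _] /andP[Cq _].
by case: p q Cp Cq => [a x] [b y] /Cj /= -> /Cj /= ->; rewrite xpair_eqE eqxx.
Qed.

Lemma size_undup_lex_pairs l (B : pred T) :
  size (undup [seq p <- s | (p.1 < l) || (p.1 == l) && B p.2]) =
  \sum_(0 <= j < l) size (undup [seq p.2 | p <- s & p.1 == j])
  + size (undup [seq p.2 | p <- s & (p.1 == l) && B p.2]).
Proof.
rewrite -filter_undup size_filter (@size_undup_snd_fst_eq _ l); last by move=> p /andP[/eqP].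
rewrite (eq_bigr (fun j => count (fun p => p.1 == j) (undup s))); last first.
  by move=> j _; rewrite (@size_undup_snd_fst_eq _ j) // => p /eqP.
rewrite -count_fst_lt.
have := count_predUI (fun p : nat * T => p.1 < l) (fun p => (p.1 == l) && B p.2) (undup s).
rewrite (eq_count (a1 := predI _ _) (a2 := pred0)); last by move=> p /=; case: ltngtP.
by rewrite count_pred0 addn0.
Qed.

End PairCounting.

Section ScanInvariant.
Variables (R : realType) (m n : nat) (D : 'M[R]_(m, n)) (Q : 'M[int]_(m, n)).
Variables (i : 'I_n) (L : seq nat).

Local Notation lab r := (nth 0%N L r).
Local Notation entry r := (Dat D r i).

Definition block (l : nat) (s : seq nat) := [seq r <- s | lab r == l].

Lemma block_rcons l s r :
  block l (rcons s r) = if lab r == l then rcons (block l s) r else block l s.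
Proof. by rewrite /block filter_rcons. Qed.

(* The state (IDval, IDvalInit, subID, newCount) after scanning the rows s,
   in nondecreasing order of column i. *)
Definition scan_inv (s : seq nat) (st : seq R * seq nat * seq nat * seq nat) : Prop :=
  let: (idv, init, sub, cnt) := st in
  [/\ forall l, nth 0%N init l = has (fun r => lab r == l) s,
      forall l, has (fun r => lab r == l) s ->
        nth 0%R idv l \in map (fun r => entry r) (block l s) /\
        (forall x, x \in map (fun r => entry r) (block l s) -> (x <= nth 0%R idv l)%R),
      forall l, nth 0%N cnt l = (size (undup (map (fun r => entry r) (block l s)))).-1 &
      forall r, r \in s -> nth 0%N sub r =
        (size (undup (map (fun r => entry r)
                          [seq r' <- block (lab r) s | (entry r' <= entry r)%R]))).-1].

Lemma scan_inv_nil : scan_inv [::] (nseq m 0%R, nseq m 0%N, nseq m 0%N, nseq m 0%N).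
Proof. by split => //= l; rewrite ?nth_nseq; case: ifP. Qed.

Lemma scan_inv_rcons s r idv init sub cnt idv' init' sub' cnt' :
  scan_inv s (idv, init, sub, cnt) -> r \notin s ->
  (forall x, x \in s -> (entry x <= entry r)%R) ->
  (forall l, l != lab r -> [/\ nth 0%N init' l = nth 0%N init l,
                              nth 0%R idv' l = nth 0%R idv l &
                              nth 0%N cnt' l = nth 0%N cnt l]) ->
  nth 0%N init' (lab r) = 1%N -> nth 0%R idv' (lab r) = entry r ->
  nth 0%N cnt' (lab r) =
    (size (undup (rcons (map (fun r => entry r) (block (lab r) s)) (entry r)))).-1 ->
  nth 0%N sub' r = nth 0%N cnt' (lab r) ->
  (forall r', r' != r -> nth 0%N sub' r' = nth 0%N sub r') ->
  scan_inv (rcons s r) (idv', init', sub', cnt').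
Proof.
move=> [Hinit Hidv Hcnt Hsub] rs s_le other init_r idv_r cnt_r sub_r sub_other.
split.
- move=> l; rewrite has_rcons /=.
  have [->|ne] := eqVneq l (lab r); first by rewrite init_r ?eqxx.
  by have [-> _ _] := other _ ne; rewrite Hinit.
- move=> l; rewrite has_rcons block_rcons /=.
  have [->|ne] := eqVneq l (lab r); last by have [_ -> _] := other _ ne; exact: Hidv.
  rewrite ?eqxx idv_r map_rcons mem_rcons inE eqxx; split => // x.
  rewrite mem_rcons inE => /orP[/eqP -> //|/mapP[y]].
  by rewrite mem_filter => /andP[_ ys] ->; apply: s_le.
- move=> l; rewrite block_rcons.
  have [->|ne] := eqVneq l (lab r); first by rewrite ?eqxx cnt_r map_rcons.
  by have [_ _ ->] := other _ ne.
move=> r'; rewrite mem_rcons inE; have [-> _|ne /= r's] := eqVneq r' r.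
  rewrite sub_r cnt_r block_rcons eqxx filter_rcons lexx map_rcons.
  congr (size (undup (rcons _ _))).-1; congr map.
  apply/esym/all_filterP/allP => x; rewrite mem_filter => /andP[_ xs]; exact: s_le.
rewrite sub_other // Hsub // block_rcons.
case: eqP => // E; rewrite filter_rcons.
case: ifP => // le; rewrite map_rcons size_undup_rcons ifT //.
apply/mapP; exists r'; first by rewrite mem_filter lexx /= /block mem_filter eqxx r's.
by apply/eqP; rewrite eq_le le s_le.
Qed.

Lemma scan_inv_step s st j : scan_inv s st -> Qat Q j i \notin s ->
  (forall x, x \in s -> (entry x <= entry (Qat Q j i))%R) ->
  scan_inv (rcons s (Qat Q j i)) (refine_step D Q i L st j).
Proof.
case: st => [[[idv init] sub] cnt] inv rs s_le; rewrite /refine_step.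
set r := Qat Q j i; set l := lab r.
have [Hinit Hidv Hcnt _] := inv.
have upd_eq (T : Type) (x0 : T) t y : nth x0 (set_nth x0 t l y) l = y.
  by rewrite nth_set_nth /=; case: eqP.
have upd_ne (T : Type) (x0 : T) t y l' : l' != l -> nth x0 (set_nth x0 t l y) l' = nth x0 t l'.
  by move=> ne; rewrite nth_set_nth /= (negbTE ne).
have sub_eq y : nth 0%N (set_nth 0%N sub r y) r = y.
  by rewrite nth_set_nth /=; case: eqP.
have sub_ne y r' : r' != r -> nth 0%N (set_nth 0%N sub r y) r' = nth 0%N sub r'.
  by move=> ne; rewrite nth_set_nth /= (negbTE ne).
case: ifP => [/eqP init0|/negbT init1].
  have block0 : block l s = [::].
    have : ~~ has (fun r => lab r == l) s by move: init0; rewrite Hinit; case: has.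
    by rewrite has_filter negbK => /eqP.
  apply: (scan_inv_rcons inv) => //.
  - by move=> l' ne; rewrite !upd_ne.
  - by rewrite Hcnt block0.
  - by move=> r' ne; rewrite sub_ne.
have has_l : has (fun r => lab r == l) s by move: init1; rewrite Hinit; case: has.
have [idv_in idv_max] := Hidv _ has_l.
case: ifP => [ne|/negbFE/eqP eqd].
  have val_new : entry r \notin map (fun r => entry r) (block l s).
    apply/negP => /idv_max le; move: idv_in => /mapP[y]; rewrite mem_filter => /andP[_ ys] ey.
    by move: ne; rewrite eq_le le ey s_le.
  have size_pos : (0 < size (undup (map (fun r => entry r) (block l s))))%N.
    by move: idv_in; rewrite -mem_undup; case: (undup _).
  apply: (scan_inv_rcons inv) => //.
  - by move=> l' ne'; rewrite !upd_ne.
  - by rewrite Hinit has_l.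
  - by rewrite upd_eq size_undup_rcons (negbTE val_new) Hcnt prednK.
  - by move=> r' ne'; rewrite sub_ne.
apply: (scan_inv_rcons inv) => //.
- by rewrite Hinit has_l.
- by rewrite size_undup_rcons -eqd idv_in Hcnt.
- by move=> r' ne; rewrite sub_ne.
Qed.

Hypothesis Q_uniq : uniq [seq Qat Q k i | k <- iota 0 m].
Hypothesis Q_sorted : sorted <=%R [seq entry (Qat Q k i) | k <- iota 0 m].

Lemma scan_inv_iota j : (j <= m)%N ->
  scan_inv [seq Qat Q k i | k <- iota 0 j]
    (foldl (refine_step D Q i L) (nseq m 0%R, nseq m 0%N, nseq m 0%N, nseq m 0%N)
           (iota 0 j)).
Proof.
elim: j => [_|j IH jm]; first exact: scan_inv_nil.
have nthQ t : (t < m)%N -> nth 0%N [seq Qat Q k i | k <- iota 0 m] t = Qat Q t i.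
  by move=> tm; rewrite (nth_map 0%N) ?size_iota // nth_iota.
rewrite -addn1 iotaD add0n foldl_cat map_cat cats1 /=.
apply: scan_inv_step; first exact: IH (ltnW jm).
- apply/mapP => -[k]; rewrite mem_iota add0n => kj /eqP.
  rewrite -!nthQ ?(ltn_trans kj) // nth_uniq ?size_map ?size_iota ?(ltn_trans kj) // => /eqP jk.
  by move: kj; rewrite jk ltnn.
move=> x /mapP[k]; rewrite mem_iota add0n => kj ->.
have := sorted_leq_nth le_trans lexx 0%R Q_sorted.
move=> /(_ k j); rewrite !inE !size_map !size_iota (ltn_trans kj) // jm.
move=> /(_ isT isT (ltnW kj)).
by rewrite !(nth_map 0%N) ?size_iota ?(ltn_trans kj) // !nth_iota ?(ltn_trans kj).
Qed.

End ScanInvariant.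

Section PrefixSums.
Variables (m : nat) (c : seq nat).

Let psum l := (\sum_(0 <= j < l) nth 0 c j)%N.
Let step := (fun nn j => set_nth 0 nn j (nth 0 nn j.+1 - nth 0 c j))%N.
Let nn0 := set_nth 0%N (nseq m 0%N) (m - 1) (psum (m - 1)).

Lemma nth_prefix_sums_from k len : k + len = m - 1 -> forall l, l <= m - 1 ->
  nth 0 (foldr (fun j nn => step nn j) nn0 (iota k len)) l = if k <= l then psum l else 0.
Proof.
elim: len k => [|len IH] k.
  rewrite addn0 => -> l lm /=; rewrite /nn0 nth_set_nth /=.
  case: eqP => [->|ne]; first by rewrite leqnn.
  rewrite nth_nseq if_same; case: ifP => // le.
  by case: ne; apply/eqP; rewrite eqn_leq le lm.
move=> e l lm /=; rewrite {1}/step nth_set_nth /=.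
have e' : k.+1 + len = m - 1 by rewrite addSnnS.
case: eqP => [->|ne].
  rewrite IH // ?leqnn; last by rewrite -e' leq_addr.
  by rewrite /psum big_nat_recr //= addnK ?leqnn.
by rewrite IH //; case: (ltngtP k l) => // /eqP; rewrite eq_sym => /eqP.
Qed.

Lemma nth_prefix_sums l : 0 < m -> l <= m - 1 ->
  nth 0 (foldl step nn0 (rev (iota 1 (m - 2)))) l = psum l.
Proof.
move=> m0 lm; rewrite foldl_rev.
have [m1|m2] : m = 1 \/ 1 < m by case: (ltngtP m 1) m0 => // h _; [right|left].
  have l0 : l = 0 by move: lm; rewrite m1; case: l.
  have -> : iota 1 (m - 2) = iota 0 0 by rewrite m1.
  by rewrite (@nth_prefix_sums_from 0) ?m1 //= l0.
rewrite (@nth_prefix_sums_from 1) //; last by rewrite add1n -subSn // subn2 subn1.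
by case: l lm => // _; rewrite /psum big_geq.
Qed.

End PrefixSums.

Section RefineEntries.
Variables (R : realType) (m n : nat) (D : 'M[R]_(m, n)) (Q : 'M[int]_(m, n)).
Variables (i : 'I_n) (L : seq nat).
Hypothesis Q_perm : perm_eq [seq Qat Q k i | k <- iota 0 m] (iota 0 m).
Hypothesis Q_sorted : sorted <=%R [seq Dat D (Qat Q k i) i | k <- iota 0 m].

Local Notation lab r := (nth 0%N L r).
Local Notation entry r := (Dat D r i).
Local Notation rows := [seq Qat Q k i | k <- iota 0 m].

Lemma size_QuickLexSortRefine : size (QuickLexSortRefine D Q i L) = m.
Proof.
by rewrite /QuickLexSortRefine; case: foldl => [[[? ?] ?] ?]; rewrite size_map size_iota.
Qed.

Lemma nth_QuickLexSortRefine r : (r < m)%N -> (lab r < m)%N ->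
  nth 0%N (QuickLexSortRefine D Q i L) r =
  (lab r + \sum_(0 <= j < lab r) (size (undup (map (fun r => entry r) (block L j rows)))).-1
   + (size (undup (map (fun r => entry r)
                      [seq r' <- block L (lab r) rows | (entry r' <= entry r)%R]))).-1)%N.
Proof.
move=> rm lm.
have Q_uniq : uniq rows by rewrite (perm_uniq Q_perm) iota_uniq.
have := scan_inv_iota L Q_uniq Q_sorted (leqnn m).
rewrite /QuickLexSortRefine; case: foldl => [[[idv init] sub] cnt] [_ _ Hcnt Hsub].
rewrite (nth_map 0%N) ?size_iota // nth_iota // add0n.
rewrite nth_prefix_sums ?(leq_ltn_trans _ lm) //; last first.
  by rewrite leq_subRL ?add1n // (leq_ltn_trans _ lm).
rewrite Hsub; last by rewrite (perm_mem Q_perm) mem_iota.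
by congr (_ + _ + _)%N; apply: eq_bigr => j _; exact: Hcnt.
Qed.

End RefineEntries.

Section LexRank.
Variables (R : realType) (m n : nat) (D : 'M[R]_(m, n)) (a : seq 'I_n).
Local Notation row r := (subrow D a r).

Definition lexrank_seq (v : seq R) :=
  size (undup [seq row r' | r' <- enum 'I_m & lexlt (row r') v]).

Definition lexrank (r : 'I_m) := lexrank_seq (row r).

Lemma nth_ranking_vector (r : 'I_m) : nth 0%N (ranking_vector D a) r = lexrank r.
Proof. by rewrite /ranking_vector (nth_map r) ?size_enum_ord // nth_ord_enum. Qed.

Lemma size_ranking_vector : size (ranking_vector D a) = m.
Proof. by rewrite size_map size_enum_ord. Qed.

Lemma size_subrow (r : 'I_m) : size (row r) = size a.
Proof. exact: size_map. Qed.

Lemma lexrank_lt r1 r2 : lexlt (row r1) (row r2) -> (lexrank r1 < lexrank r2)%N.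
Proof.
move=> lt12; rewrite /lexrank /lexrank_seq; set A := undup _; set B := undup _.
have AB : {subset A <= B}.
  move=> x; rewrite !mem_undup => /mapP[y]; rewrite mem_filter => /andP[ly ye] ->.
  by apply/mapP; exists y; rewrite // mem_filter (lexlt_trans ly lt12).
have r1B : row r1 \in B.
  by rewrite mem_undup; apply/mapP; exists r1; rewrite // mem_filter lt12 mem_enum.
have r1A : row r1 \notin A.
  rewrite mem_undup; apply/mapP => -[y]; rewrite mem_filter => /andP[ly _] e.
  by move: ly; rewrite -e lexlt_irr.
rewrite ltnNge; apply/negP => le.
have [_ AeqB] := uniq_min_size (undup_uniq _) AB le.
by move: r1A; rewrite AeqB r1B.
Qed.

Lemma lexrank_ltE r1 r2 : (lexrank r1 < lexrank r2)%N = lexlt (row r1) (row r2).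
Proof.
apply/idP/idP => [lt|]; last exact: lexrank_lt.
have [e|ne] := eqVneq (row r1) (row r2); first by move: lt; rewrite /lexrank e ltnn.
case/orP: (lexlt_total (etrans (size_subrow r1) (esym (size_subrow r2))) ne) => // /lexrank_lt.
by rewrite ltnNge (ltnW lt).
Qed.

Lemma lexrank_eqE r1 r2 : (lexrank r1 == lexrank r2) = (row r1 == row r2).
Proof.
have [e|ne] := eqVneq (row r1) (row r2); first by rewrite /lexrank e eqxx.
case/orP: (lexlt_total (etrans (size_subrow r1) (esym (size_subrow r2))) ne)
  => /lexrank_lt lt; first by rewrite ltn_eqF.
by rewrite eq_sym ltn_eqF.
Qed.

Lemma lexrank_lt_m r : (lexrank r < m)%N.
Proof.
rewrite /lexrank /lexrank_seq (leq_ltn_trans (size_undup _)) // size_map size_filter.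
rewrite -[X in (_ < X)%N](size_enum_ord m).
rewrite -(count_predC (fun r' => lexlt (row r') (row r))) -addn1 leq_add2l -has_count.
by apply/hasP; exists r; rewrite ?mem_enum //= lexlt_irr.
Qed.

(* The lexrank r distinct rows strictly below row r have pairwise distinct
   ranks in [0, lexrank r), so they fill that interval. *)
Lemma lexrank_dense r j : (j < lexrank r)%N -> exists r', lexrank r' = j.
Proof.
move=> jr; set U := undup [seq row r' | r' <- enum 'I_m & lexlt (row r') (row r)].
have U_rows u : u \in U -> exists2 r', u = row r' & lexlt (row r') (row r).
  by rewrite mem_undup => /mapP[y]; rewrite mem_filter => /andP[ly _] ->; exists y.
have ranks_uniq : uniq (map lexrank_seq U).
  rewrite map_inj_in_uniq ?undup_uniq // => u v /U_rows[r1 -> _] /U_rows[r2 -> _] e.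
  by apply/eqP; rewrite -lexrank_eqE; apply/eqP.
have ranks_below : {subset map lexrank_seq U <= iota 0 (lexrank r)}.
  by move=> x /mapP[u /U_rows[r1 -> lt] ->]; rewrite mem_iota add0n; exact: lexrank_lt.
have [_ E] := uniq_min_size ranks_uniq ranks_below
  (eq_leq (etrans (size_iota _ _) (esym (size_map _ _)))).
have : j \in iota 0 (lexrank r) by rewrite mem_iota.
by rewrite -E => /mapP[u /U_rows[r1 -> _] ->]; exists r1.
Qed.

Lemma size_undup_rank_block_gt0 (T : eqType) (f : 'I_m -> T) r j :
  (j < lexrank r)%N -> (0 < size (undup [seq f r' | r' <- enum 'I_m & lexrank r' == j]))%N.
Proof.
case/lexrank_dense => r' <-.
rewrite -has_predT; apply/hasP; exists (f r') => //.
by rewrite mem_undup; apply/mapP; exists r'; rewrite // mem_filter eqxx mem_enum.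
Qed.

End LexRank.

Section LexRankRcons.
Variables (R : realType) (m n : nat) (D : 'M[R]_(m, n)) (a : seq 'I_n) (i : 'I_n).
Local Notation rank := (lexrank D a).

Lemma lexrank_rcons (r : 'I_m) : lexrank D (rcons a i) r =
  size (undup [seq p <- [seq (rank r', D r' i) | r' <- enum 'I_m] |
                (p.1 < rank r)%N || (p.1 == rank r) && (p.2 < D r i)%R]).
Proof.
have subrow_rcons (r' : 'I_m) : subrow D (rcons a i) r' = rcons (subrow D a r') (D r' i).
  exact: map_rcons.
rewrite /lexrank /lexrank_seq (@size_undup_map _ _ _ _ (fun r' => (rank r', D r' i))).
  rewrite [in RHS]filter_map; congr (size (undup (map _ _))); apply: eq_filter => r' /=.
  by rewrite !subrow_rcons lexlt_rcons ?size_subrow // lexrank_ltE lexrank_eqE.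
by move=> r1 r2 _ _; rewrite !subrow_rcons eqseq_rcons xpair_eqE lexrank_eqE.
Qed.

Lemma lexrank_rcons_sum (r : 'I_m) :
  (rank r
   + \sum_(0 <= j < rank r) (size (undup [seq D r' i | r' <- enum 'I_m & rank r' == j])).-1
   + (size (undup [seq D r' i | r' <- enum 'I_m &
                                 (rank r' == rank r) && (D r' i <= D r i)%R])).-1
  = lexrank D (rcons a i) r)%N.
Proof.
rewrite lexrank_rcons (size_undup_lex_pairs _ _ (fun x => x < D r i)%R).
have snd_pairs (P : pred (nat * R)) :
    [seq p.2 | p <- [seq (rank r', D r' i) | r' <- enum 'I_m] & P p] =
    [seq D r' i | r' <- enum 'I_m & P (rank r', D r' i)].
  by rewrite filter_map -map_comp.
rewrite !snd_pairs /=.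
rewrite (@size_undup_filter_le_pred _ _ _ (fun r' => D r' i) (fun r' => rank r' == rank r)
                                   (enum 'I_m) r) ?mem_enum ?eqxx //.
congr (_ + _)%N.
rewrite {1}(_ : rank r = \sum_(0 <= j < rank r) 1)%N; last first.
  by rewrite sum_nat_const_nat subn0 muln1.
rewrite -big_split /=.
apply: eq_big_nat => j /andP[_ jr]; rewrite snd_pairs add1n prednK //.
exact: (size_undup_rank_block_gt0 (fun r' => D r' i) jr).
Qed.

End LexRankRcons.

Lemma ranking_vector_nil (R : realType) (m n : nat) (D : 'M[R]_(m, n)) :
  ranking_vector D [::] = nseq m 0%N.
Proof.
apply: (@eq_from_nth _ 0%N); rewrite size_ranking_vector ?size_nseq // => r rm.
rewrite nth_nseq rm -[r]/(nat_of_ord (Ordinal rm)) nth_ranking_vector.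
by rewrite /lexrank /lexrank_seq (eq_filter (a2 := pred0)) ?filter_pred0.
Qed.

Lemma mem_map_filter_perm_iota (T : eqType) m (s : seq nat) (P : pred nat) (f : nat -> T) :
  perm_eq s (iota 0 m) ->
  map f (filter P s) =i [seq f r | r : 'I_m <- enum 'I_m & P r].
Proof.
move=> s_perm x; apply/mapP/mapP => -[y].
  rewrite mem_filter (perm_mem s_perm) mem_iota add0n => /andP[Py ym] ->.
  by exists (Ordinal ym); rewrite // mem_filter Py mem_enum.
rewrite mem_filter => /andP[Py _] ->; exists (nat_of_ord y) => //.
by rewrite mem_filter Py (perm_mem s_perm) mem_iota add0n ltn_ord.
Qed.

Section Refinement.
Variables (R : realType) (m n : nat) (D : 'M[R]_(m, n)) (Q : 'M[int]_(m, n)).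
Hypothesis sortQ : sorting_matrix D Q.

Lemma Dat_ord (r : 'I_m) i : Dat D r i = D r i.
Proof. by rewrite /Dat valK. Qed.

Lemma sorting_matrix_perm i : perm_eq [seq Qat Q k i | k <- iota 0 m] (iota 0 m).
Proof.
have [Q_perm _] := sortQ i.
have -> : [seq Qat Q k i | k <- iota 0 m] = map absz [seq Q k i | k <- enum 'I_m].
  by rewrite -val_enum_ord -!map_comp; apply: eq_map => k /=; rewrite /Qat valK.
have -> : iota 0 m = map absz [seq (k%:Z)%R | k <- iota 0 m] by rewrite -map_comp map_id.
exact: perm_map.
Qed.

Lemma QuickLexSortRefine_ranking_vector a i :
  QuickLexSortRefine D Q i (ranking_vector D a) = ranking_vector D (rcons a i).
Proof.
have Q_perm := sorting_matrix_perm i; have [_ Q_sorted] := sortQ i.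
apply: (@eq_from_nth _ 0%N); first by rewrite size_QuickLexSortRefine size_ranking_vector.
rewrite size_QuickLexSortRefine => r rm; set ro := Ordinal rm.
rewrite -[r]/(nat_of_ord ro) nth_QuickLexSortRefine // ?nth_ranking_vector ?lexrank_lt_m //.
rewrite -lexrank_rcons_sum; congr (_ + _ + _)%N.
  apply: eq_bigr => j _; congr (_.-1).
  rewrite /block (eq_size_undup (mem_map_filter_perm_iota _ _ Q_perm)).
  congr (size (undup _)); rewrite (eq_filter (a2 := fun r' => lexrank D a r' == j)).
    by apply: eq_map => r'; rewrite Dat_ord.
  by move=> r' /=; rewrite nth_ranking_vector.
congr (_.-1); rewrite /block -filter_predI.
rewrite (eq_size_undup (mem_map_filter_perm_iota _ _ Q_perm)).
congr (size (undup _)); rewrite (eq_filter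
  (a2 := fun r' => (lexrank D a r' == lexrank D a ro) && (D r' i <= D ro i)%R)).
  by apply: eq_map => r'; rewrite Dat_ord.
by move=> r' /=; rewrite nth_ranking_vector (Dat_ord r') (Dat_ord ro) andbC.
Qed.

End Refinement.

Theorem mainTheorem3 (R : realType) (m n : nat)
    (D : 'M[R]_(m, n)) (Q : 'M[int]_(m, n)) (a : seq 'I_n) :
  sorting_matrix D Q ->
  QuickLexSort D Q a = ranking_vector D a.
Proof.
move=> sortQ; elim/last_ind: a => [|a i IH]; first by rewrite ranking_vector_nil.
rewrite /QuickLexSort foldl_rcons -/(QuickLexSort D Q a) IH.
exact: QuickLexSortRefine_ranking_vector.
Qed.
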